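(* Let $G$ be an undirected embedded planar graph of maximum degree $4$ and $H$ a demand graph on $V(G)$ whose edges form a matching, such that every $v$ with $\deg_H(v)=1$ has $\deg_G(v)\le3$. Let $G''$ be obtained from $G$ as follows: every node $v$ with $\deg_H(v)=0$ and $\deg_G(v)=4$, with incident edges $e_1,e_2,e_3,e_4$ in clockwise order, is replaced by a $4$-cycle $x_1x_2x_3x_4x_1$ where $e_i$ is attached to $x_i$; every node $v$ with $\deg_H(v)=1$ and $\deg_G(v)=3$ keeps its role as terminal, each of its three incident edges is subdivided by a new node, and a triangle is added on the three new nodes; all other nodes are left unchanged. Then $H$ has an integral uncrossed flow in $G$ (one path per demand, pairwise edge-disjoint and pairwise uncrossed) if and only if $H$ has a totally node-disjoint flow in $G''$ (one path per demand, the paths pairwise node-disjoint, including endpoints).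
   Context: All capacities and demands equal $1$. Two paths $P,Q$ of the embedded graph cross if there is a maximal common subpath $Z$ (possibly a single node) containing no endpoint of $P$ or $Q$ such that, writing $P=P_1,e,Z,e',P_2$ and $Q=Q_1,g,Z,g',Q_2$, the edges $e,g,e',g'$ alternate between $P$ and $Q$ in the clockwise order around $Z$; otherwise they are uncrossed. *)

From HB Require Import structures.
From mathcomp Require Import all_boot fingroup perm.
Set Implicit Arguments. Unset Strict Implicit. Unset Printing Implicit Defensive.

Section Embedded.
(* V : nodes, D : darts (half-edges).  tl d = node at which dart d sits,
   inv d = other half of the same edge, rot d = next dart around tl d in
   clockwise order. *)
Variables (V D : finType) (tl : D -> V) (inv rot : {perm D}).

Definition hd (d : D) : V := tl (inv d).
Definition darts_at (v : V) : {set D} := [set d | tl d == v].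
Definition degG (v : V) : nat := #|darts_at v|.

Definition rotation_system : Prop :=
  [/\ forall d, inv (inv d) = d,
      forall d, tl (inv d) != tl d,
      forall d, tl (rot d) = tl d
    & forall d d', tl d = tl d' -> fconnect rot d d'].

Definition face (d : D) : D := rot (inv d).
Definition comp_rel : rel D :=
  fun d d' => [|| d' == inv d, d' == rot d | d == rot d'].

(* Planarity: Euler's formula V - E + F = 2 on every connected component
   (genus 0); isolated nodes carry no darts and are planar trivially. *)
Definition planar_emb : Prop :=
  #|[set tl d | d in [set: D]]| + fcard face [set: D]
  = #|D| %/ 2 + 2 * n_comp comp_rel [set: D].

Definition gpath (s t : V) (p : seq D) : bool :=
  if p is d :: p' then
    [&& tl d == s, path (fun x y => hd x == tl y) d p',
        hd (last d p') == t & uniq (s :: map hd p)]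
  else false.

Definition edisj (p q : seq D) : bool :=
  all (fun d => (d \notin q) && (inv d \notin q)) p.

(* darts at the node of d strictly after d and strictly before d' in
   clockwise order (all other darts at the node when d' = d) *)
Definition between (d d' : D) : seq D :=
  traject rot (rot d) (findex rot (rot d) d').

(* The clockwise cyclic order of the darts around the subpath Z (contracted
   to a point).  Z is given by its (forward) darts z; d0 is a dart at its
   first node (used when Z is a single node). *)
Definition around (z : seq D) (d0 : D) : seq D :=
  match z with
  | [::] => orbit rot d0
  | f0 :: _ =>
      let r := size z in
      let fw k := nth f0 z k in
      let bw k := inv (nth f0 z k.-1) in
      between (fw 0) (fw 0)
      ++ flatten [seq between (bw k) (fw k) | k <- iota 1 r.-1]
      ++ between (bw r) (bw r)
      ++ flatten [seq between (fw k) (bw k) | k <- rev (iota 1 r.-1)]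
  end.

Definition sep (i j k : nat) : bool := (minn i j < k) && (k < maxn i j).
Definition alternate (s : seq D) (x1 y1 x2 y2 : D) : bool :=
  [&& uniq [:: x1; y1; x2; y2], all (fun x => x \in s) [:: x1; y1; x2; y2]
    & sep (index x1 s) (index x2 s) (index y1 s)
      != sep (index x1 s) (index x2 s) (index y2 s)].

(* P = P1,e,Z,e',P2 and Q = Q1,g,Z,g',Q2 with Z (nodes i..j of P, a..b of Q)
   a maximal common subpath containing no endpoint, traversed in the same
   direction, and e,g,e',g' alternating around Z. *)
Definition crossing_dir (p q : seq D) : Prop :=
  exists (x0 : D) (i j a b : nat),
    [/\ 0 < i <= j, j < size p, 0 < a <= b, b < size q & j - i = b - a] /\
    tl (nth x0 p i) = tl (nth x0 q a) /\
    (forall k, k < j - i -> nth x0 p (i + k) = nth x0 q (a + k)) /\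
    [/\ nth x0 p i.-1 != nth x0 q a.-1, nth x0 p j != nth x0 q b,
        nth x0 p i.-1 != inv (nth x0 q a) & nth x0 p i != inv (nth x0 q a.-1)]
    /\
    alternate (around (take (j - i) (drop i p)) (nth x0 p i))
      (inv (nth x0 p i.-1)) (inv (nth x0 q a.-1)) (nth x0 p j) (nth x0 q b).

Definition revp (q : seq D) : seq D := rev (map inv q).

Definition cross (p q : seq D) : Prop :=
  crossing_dir p q \/ crossing_dir p (revp q).

Definition matching (h : rel V) : Prop :=
  [/\ forall u v, h u v = h v u, forall u, ~~ h u u
    & forall u v w, h u v -> h u w -> v = w].
Definition degH (h : rel V) (v : V) : nat := #|[set w | h v w]|.

Definition uncrossed_flow (h : rel V) : Prop :=
  exists F : V -> V -> seq D,
    (forall s t, h s t -> gpath s t (F s t)) /\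
    (forall s t s' t', h s t -> h s' t' -> s' != s -> s' != t ->
       edisj (F s t) (F s' t') /\ ~ cross (F s t) (F s' t')).

(* The graph G'' : nodes inl v for unreplaced nodes v, inr d for the new
   node associated with dart d at a replaced/modified node. *)
Definition special4 (h : rel V) (v : V) : bool := (degH h v == 0) && (degG v == 4).
Definition special3 (h : rel V) (v : V) : bool := (degH h v == 1) && (degG v == 3).

Definition vert2 (h : rel V) (x : V + D) : bool :=
  match x with
  | inl v => ~~ special4 h v
  | inr d => special4 h (tl d) || special3 h (tl d)
  end.

Definition att (h : rel V) (d : D) : V + D :=
  if special4 h (tl d) || special3 h (tl d) then inr d else inl (tl d).

Definition adj0 (h : rel V) (x y : V + D) : bool :=
  [|| [exists d, (x == att h d) && (y == att h (inv d))],
      [exists d, [&& special4 h (tl d), x == inr d & y == inr (rot d)]],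
      [exists d, [&& special3 h (tl d), x == inl (tl d) & y == inr d]]
    | [exists d, [exists d', [&& special3 h (tl d), tl d' == tl d, d != d',
                              x == inr d & y == inr d']]]].

Definition adj2 (h : rel V) : rel (V + D) := fun x y => adj0 h x y || adj0 h y x.

Definition npath2 (h : rel V) (s t : V) (p : seq (V + D)) : bool :=
  if p is x :: p' then
    [&& x == inl s, path (adj2 h) x p', last x p' == inl t, uniq p
      & all (vert2 h) p]
  else false.

Definition ndisj (p q : seq (V + D)) : bool := all (fun x => x \notin q) p.

Definition node_disjoint_flow2 (h : rel V) : Prop :=
  exists F : V -> V -> seq (V + D),
    (forall s t, h s t -> npath2 h s t (F s t)) /\
    (forall s t s' t', h s t -> h s' t' -> s' != s -> s' != t ->
       ndisj (F s t) (F s' t')).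

End Embedded.

(* Lifting: route each path of G through every gadget it visits, along the
   shorter arc of a 4-cycle or the edge between its two darts in a triangle.
   Two lifted paths can only meet inside a common gadget.  Two arcs of a
   4-cycle overlap only if one of them joins opposite darts, and then the two
   pairs of (distinct) darts alternate, i.e. the paths cross; in a triangle
   the paths would share a dart or both end there; at an unreplaced node the
   three or four darts they use contradict the degree bounds.

   Projecting back: shortcut each path of G'' to a chordless one.  It then
   visits each gadget in one stretch, so contracting the gadgets yields a
   simple path of G, and these paths are edge-disjoint.  A crossing would
   sit at a single node of degree 4 with two alternating pairs of darts, and
   the path through the first pair must use a cycle node of the second. *)

From Pilot Require Import Defs.
From mathcomp Require Import all_boot fingroup perm zify.
Set Implicit Arguments. Unset Strict Implicit. Unset Printing Implicit Defensive.

Lemma sorted_cat_link (T : eqType) (r : rel T) x s1 s2 :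
  sorted r s1 -> sorted r s2 ->
  (s1 != [::] -> s2 != [::] -> r (last x s1) (head x s2)) -> sorted r (s1 ++ s2).
Proof.
case: s1 => [//|x1 s1] /= p1; case: s2 => [|y s2] /= p2 link; first by rewrite cats0.
by rewrite cat_path p1 /= p2 link ?andbT.
Qed.

Lemma head_cat_nil (T : eqType) (x : T) s1 s2 : s1 != [::] -> head x (s1 ++ s2) = head x s1.
Proof. by case: s1. Qed.

Lemma last_cat_nil (T : eqType) (x : T) s1 s2 : s2 != [::] -> last x (s1 ++ s2) = last x s2.
Proof. by rewrite last_cat; case: s2. Qed.

Lemma exists_switch (f : nat -> bool) i j : i <= j -> f i -> ~~ f j ->
  exists l, [/\ i <= l, l < j, f l & ~~ f l.+1].
Proof.
elim: j i => [|j IH] i; first by rewrite leqn0 => /eqP -> ->.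
rewrite leq_eqVlt => /orP [/eqP -> -> //|]; rewrite ltnS => ij fi nfj.
case fj: (f j); first by exists j.
have [l [il lj fl nfl]] := IH i ij fi (negbT fj).
by exists l; rewrite il ltnS ltnW.
Qed.

Definition chordless (T : Type) (r : rel T) x0 (S : seq T) : Prop :=
  forall i j, i.+1 < j -> j < size S -> ~~ r (nth x0 S i) (nth x0 S j).

Lemma chordless_subseq (T : eqType) (r : rel T) x0 (S : seq T) : sorted r S ->
  exists S', [/\ subseq S' S, sorted r S', chordless r x0 S',
    (S' == [::]) = (S == [::]) & head x0 S' = head x0 S /\ last x0 S' = last x0 S].
Proof.
elim: {S}_.+1 {-2}S (ltnSn (size S)) => // n IH S Sn sS.
have [chl|] := boolP [forall i : 'I_(size S), forall j : 'I_(size S),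
   (i.+1 < j) ==> ~~ r (nth x0 S i) (nth x0 S j)].
  exists S; split=> // i j ij jS.
  have iS : i < size S by rewrite (ltn_trans _ jS) // (ltn_trans _ ij).
  by move/forallP: chl => /(_ (Ordinal iS)) /forallP /(_ (Ordinal jS)) /implyP; apply.
case/forallPn=> [[i iS]] /forallPn [[j jS]]; rewrite /= negb_imply negbK => /andP [ij chord].
have i1S : i.+1 < size S by apply: ltn_trans jS.
have take_nil : take i.+1 S != [::] by rewrite -size_eq0 size_take i1S.
have drop_nil : drop j S != [::] by rewrite -size_eq0 size_drop subn_eq0 -ltnNge.
set S' := take i.+1 S ++ drop j S.
have subS : subseq S' S.
  rewrite /S' -{3}(cat_take_drop i.+1 S); apply: cat_subseq => //.
  rewrite (_ : drop j S = drop (j - i.+1) (drop i.+1 S)); first exact: drop_subseq.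
  by rewrite drop_drop subnK // ltnW.
have sS' : sorted r S'.
  apply: (sorted_cat_link (x := x0)); first exact: take_sorted.
    by have := @cat_sorted2 _ r (take j S) (drop j S); rewrite cat_take_drop => /(_ sS) [].
  by move=> _ _; rewrite (take_nth x0 iS) last_rcons (drop_nth x0 jS).
have sizeS' : size S' < n.
  by move: Sn; rewrite /S' size_cat size_take size_drop i1S; lia.
have [S'' [subS' sS'' chl nilS' [hdS' lastS']]] := IH S' sizeS' sS'.
exists S''; split=> //.
- exact: subseq_trans subS.
- by rewrite nilS' /S' -!size_eq0 size_cat size_take size_drop i1S; apply/eqP/eqP; lia.
- rewrite hdS' lastS' /S' head_cat_nil // last_cat_nil //.
  split; first by rewrite -{2}(cat_take_drop i.+1 S) head_cat_nil.
  by rewrite -{2}(cat_take_drop j S) last_cat_nil.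
Qed.

Lemma alternate_opposite (D : finType) (a b c e x1 y1 y2 : D) :
  uniq [:: a; b; c; e] -> x1 \in [:: a; b; c; e] -> y1 \in [:: a; b; c; e] ->
  y2 \in [:: a; b; c; e] -> uniq [:: x1; y1; a; y2] ->
  alternate [:: a; b; c; e] x1 y1 a y2 = (x1 == c).
Proof.
move=> abce; have /and4P [] := abce.
rewrite !inE !negb_or => /and3P [/negbTE ab /negbTE ac /negbTE ae] /andP [/negbTE bc /negbTE be].
move=> /negbTE ce _; rewrite /alternate.
by move=> /or4P [] /eqP -> /or4P [] /eqP -> /or4P [] /eqP -> //=;
  rewrite ?inE ?eqxx ?ab ?ac ?ae ?bc ?be ?ce ?(eq_sym b a) ?(eq_sym c a) ?(eq_sym e a)
    ?(eq_sym c b) ?(eq_sym e b) ?(eq_sym e c) ?ab ?ac ?ae ?bc ?be ?ce //= ?orbT ?andbF.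
Qed.

(** * Rotation systems and the graph G'' *)

Section Gadgets.
Variables (V D : finType) (tl : D -> V) (inv rot : {perm D}) (h : rel V).
Hypothesis rs : rotation_system tl inv rot.
Hypothesis degG_le4 : forall v, degG tl v <= 4.
Hypothesis hmatch : matching h.
Hypothesis degG_terminal : forall v, degH h v = 1 -> degG tl v <= 3.

Local Notation hd := (hd tl inv).
Local Notation degG := (degG tl).
Local Notation sp4 := (special4 tl h).
Local Notation sp3 := (special3 tl h).
Local Notation hpath := (path (fun x y => hd x == tl y)).

Lemma invK : involutive inv.
Proof. by case: rs. Qed.

Lemma tl_inv d : tl (inv d) != tl d.
Proof. by case: rs. Qed.

Lemma tl_rot d : tl (rot d) = tl d.
Proof. by case: rs. Qed.

Lemma tl_iter_rot n d : tl (iter n rot d) = tl d.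
Proof. by elim: n => //= n IH; rewrite tl_rot. Qed.

Lemma fconnect_rotE d e : fconnect rot d e = (tl e == tl d).
Proof.
apply/idP/eqP; first by move/iter_findex => <-; rewrite tl_iter_rot.
by case: rs => _ _ _ rs_conn /esym /rs_conn.
Qed.

Lemma mem_orbit_rot d e : (e \in orbit rot d) = (tl e == tl d).
Proof. by rewrite -fconnect_orbit fconnect_rotE. Qed.

Lemma size_orbit_rot d : size (orbit rot d) = degG (tl d).
Proof.
rewrite /orbit size_traject /fingraph.order /degG /darts_at.
by apply: eq_card => e; rewrite inE -fconnect_rotE.
Qed.

Lemma uniq_darts_at_le v (l : seq D) : uniq l -> all (fun e => tl e == v) l -> size l <= degG v.
Proof.
move=> ul al; apply/card_geqP; exists l; split => // e el.
by rewrite inE; move/allP: al => /(_ e el).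
Qed.

Section DegreeFour.
Variable d : D.
Hypothesis deg4 : degG (tl d) = 4.

Lemma orbit_deg4 : orbit rot d = [:: d; rot d; rot (rot d); rot (rot (rot d))].
Proof. by have := size_orbit_rot d; rewrite deg4 /orbit size_traject => ->. Qed.

Lemma rot4_deg4 : rot (rot (rot (rot d))) = d.
Proof.
have := iter_order (@perm_inj _ rot) d.
by rewrite -[fingraph.order rot d](size_traject rot d) -/(orbit rot d) size_orbit_rot deg4.
Qed.

Lemma uniq_orbit_deg4 : uniq [:: d; rot d; rot (rot d); rot (rot (rot d))].
Proof. by rewrite -orbit_deg4 orbit_uniq. Qed.

Lemma mem_orbit_deg4 e : tl e = tl d -> e \in [:: d; rot d; rot (rot d); rot (rot (rot d))].
Proof. by move=> te; rewrite -orbit_deg4 mem_orbit_rot te. Qed.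

Lemma alternate_deg4 x1 y1 y2 : uniq [:: x1; y1; d; y2] ->
  all (fun e => tl e == tl d) [:: x1; y1; d; y2] ->
  alternate (orbit rot d) x1 y1 d y2 = (x1 == rot (rot d)).
Proof.
move=> u /and4P [/eqP t1 /eqP t2 _ /andP [/eqP t3 _]].
by rewrite orbit_deg4; apply: alternate_opposite; rewrite ?uniq_orbit_deg4 ?mem_orbit_deg4.
Qed.

End DegreeFour.

Lemma degH_le1 v : degH h v <= 1.
Proof.
case: hmatch => _ _ hu; apply/card_le1_eqP => x y; rewrite !inE => hx hy.
by rewrite (hu _ _ _ hx hy).
Qed.

Lemma degH_terminal s t : h s t -> degH h s = 1.
Proof.
move=> hst; apply/eqP; rewrite eqn_leq degH_le1 /degH card_gt0.
by apply/set0Pn; exists t; rewrite inE.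
Qed.

Lemma h_sym s t : h s t -> h t s.
Proof. by case: hmatch => hC _ _; rewrite hC. Qed.

Lemma h_neq s t : h s t -> s != t.
Proof. by case: hmatch => _ hirr _ hst; apply: contraTneq hst => ->; rewrite (negbTE (hirr t)). Qed.

Lemma matching_other_ends s t s' t' : h s t -> h s' t' -> s' != s -> s' != t ->
  (s != t') && (t != t').
Proof.
move=> hst hst' n1 n2; case: hmatch => _ _ hu.
apply/andP; split; apply/eqP => e; subst t'.
- by move: n2; rewrite (hu _ _ _ hst (h_sym hst')) eqxx.
- by move: n1; rewrite (hu _ _ _ (h_sym hst) (h_sym hst')) eqxx.
Qed.

Lemma special4_deg v : sp4 v -> degG v = 4.
Proof. by case/andP => _ /eqP. Qed.

Lemma special4_degH v : sp4 v -> degH h v = 0.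
Proof. by case/andP => /eqP. Qed.

Lemma special4_not3 v : sp4 v -> ~~ sp3 v.
Proof. by case/andP => /eqP e _; rewrite /special3 e. Qed.

Lemma terminal_not_special4 s t : h s t -> ~~ sp4 s.
Proof. by move/degH_terminal => e; rewrite /special4 e. Qed.

Local Notation att := (att tl h).
Local Notation adj2 := (adj2 tl inv rot h).
Local Notation vert2 := (vert2 tl h).

Definition base (x : V + D) : V := match x with inl v => v | inr d => tl d end.

Lemma base_att d : base (att d) = tl d.
Proof. by rewrite /Defs.att; case: ifP. Qed.

Lemma att_special d : sp4 (tl d) || sp3 (tl d) -> att d = inr d.
Proof. by rewrite /Defs.att => ->. Qed.

Lemma att_plain d : ~~ (sp4 (tl d) || sp3 (tl d)) -> att d = inl (tl d).
Proof. by rewrite /Defs.att => /negbTE ->. Qed.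

Lemma att_inrK d a : att d = inr a -> d = a.
Proof. by rewrite /Defs.att; case: ifP => _ // [->]. Qed.

Lemma adj2C x y : adj2 x y = adj2 y x.
Proof. by rewrite /Defs.adj2 orbC. Qed.

Lemma adj2_att d : adj2 (att d) (att (inv d)).
Proof. by apply/orP; left; apply/or4P; apply: Or41; apply/existsP; exists d; rewrite !eqxx. Qed.

Lemma adj2_cycle d : sp4 (tl d) -> adj2 (inr d) (inr (rot d)).
Proof.
by move=> s4; apply/orP; left; apply/or4P; apply: Or42; apply/existsP; exists d; rewrite s4 !eqxx.
Qed.

Lemma adj2_terminal d : sp3 (tl d) -> adj2 (inl (tl d)) (inr d).
Proof.
by move=> s3; apply/orP; left; apply/or4P; apply: Or43; apply/existsP; exists d; rewrite s3 !eqxx.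
Qed.

Lemma adj2_triangle d d' : sp3 (tl d) -> tl d' = tl d -> d != d' -> adj2 (inr d) (inr d').
Proof.
move=> s3 t n; apply/orP; left; apply/or4P; apply: Or44; apply/existsP; exists d.
by apply/existsP; exists d'; rewrite s3 t n !eqxx.
Qed.

Lemma adj2_att_inv x y : adj2 x y -> base x != base y -> exists d, att d = x /\ att (inv d) = y.
Proof.
case/orP => /or4P [] /existsP [d H].
- by case/andP: H => /eqP -> /eqP ->; exists d.
- by case/and3P: H => _ /eqP -> /eqP ->; rewrite /= tl_rot eqxx.
- by case/and3P: H => _ /eqP -> /eqP ->; rewrite /= eqxx.
- by case/existsP: H => d' /and5P [_ /eqP t _ /eqP -> /eqP ->]; rewrite /= t eqxx.
- by case/andP: H => /eqP -> /eqP -> _; exists (inv d); rewrite invK.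
- by case/and3P: H => _ /eqP -> /eqP ->; rewrite /= tl_rot eqxx.
- by case/and3P: H => _ /eqP -> /eqP ->; rewrite /= eqxx.
- by case/existsP: H => d' /and5P [_ /eqP t _ /eqP -> /eqP ->]; rewrite /= t eqxx.
Qed.

Lemma adj2_cycle_nbr a y : sp4 (tl a) -> adj2 (inr a) y ->
  [\/ y = att (inv a), y = inr (rot a) | exists2 z, y = inr z & rot z = a].
Proof.
move=> s4; have n3 := special4_not3 s4.
case/orP => /or4P [] /existsP [d H].
- by case/andP: H => /eqP /esym /att_inrK -> /eqP ->; apply: Or31.
- by case/and3P: H => _ /eqP [->] /eqP ->; apply: Or32.
- by case/and3P: H => _ /eqP.
- by case/existsP: H => d' /and5P [s3 _ _ /eqP [e] _]; move: n3; rewrite e s3.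
- by case/andP: H => /eqP -> /eqP /esym /att_inrK e; apply: Or31; rewrite -e invK.
- by case/and3P: H => _ /eqP -> /eqP [e]; apply: Or33; exists d.
- by case/and3P: H => s3 _ /eqP [e]; move: n3; rewrite e s3.
- by case/existsP: H => d' /and5P [s3 /eqP t _ _ /eqP [e]]; move: n3; rewrite e t s3.
Qed.

(** * Lifting paths of G to G'' *)

(* The shorter arc of the 4-cycle from inr a to inr b; for opposite darts
   both arcs have length two and the one through inr (rot a) is taken. *)
Definition cycle_arc (a b : D) : seq (V + D) :=
  if (b == rot a) || (a == rot b) then [:: inr a; inr b]
  else [:: inr a; inr (rot a); inr b].

(* The nodes of G'' used by a path of G passing through v, entering by the
   dart i and leaving by the dart o (both at v); None marks an endpoint. *)
Definition visit (v : V) (i o : option D) : seq (V + D) :=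
  if sp4 v then
    if (i, o) is (Some a, Some b) then cycle_arc a b else [:: inl v]
  else if sp3 v then
    match i, o with
    | Some a, Some b => [:: inr a; inr b]
    | None, Some b => [:: inl v; inr b]
    | Some a, None => [:: inr a; inl v]
    | None, None => [:: inl v]
    end
  else [:: inl v].

Definition visit_darts (i o : option D) : seq D :=
  (if i is Some a then [:: a] else [::]) ++ (if o is Some b then [:: b] else [::]).

Definition visit_ok v i o :=
  [&& all (fun d => tl d == v) (visit_darts i o), uniq (visit_darts i o),
      visit_darts i o != [::] & sp4 v ==> (i != None) && (o != None)].

Lemma visit_okSS v a b : visit_ok v (Some a) (Some b) -> [/\ tl a = v, tl b = v & a != b].
Proof. by case/and4P => /= /and3P [/eqP -> /eqP -> _]; rewrite inE andbT => ->. Qed.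

Lemma visit_okS0 v a : visit_ok v (Some a) None -> tl a = v /\ ~~ sp4 v.
Proof. by case/and4P => /= /andP [/eqP -> _] _ _; rewrite implybF. Qed.

Lemma visit_ok0S v b : visit_ok v None (Some b) -> tl b = v /\ ~~ sp4 v.
Proof. by case/and4P => /= /andP [/eqP -> _] _ _; rewrite implybF. Qed.

Lemma visit_ok00 v : ~ visit_ok v None None.
Proof. by case/and4P. Qed.

Lemma opposite_deg4 a b : sp4 (tl a) -> tl b = tl a -> a != b ->
  ~~ ((b == rot a) || (a == rot b)) -> b = rot (rot a).
Proof.
move=> s4 tb; have deg4 := special4_deg s4.
move: (mem_orbit_deg4 deg4 tb); rewrite !inE => /or4P [] /eqP -> //;
  by rewrite ?(rot4_deg4 deg4) eqxx ?orbT.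
Qed.

Lemma visit_nil v i o : visit v i o != [::].
Proof. by rewrite /visit /cycle_arc; case: i => [a|]; case: o => [b|]; repeat case: ifP. Qed.

Lemma all_base_visit v i o : visit_ok v i o -> all (fun x => base x == v) (visit v i o).
Proof.
case: i => [a|]; case: o => [b|] ok; rewrite /visit ?(negbTE (visit_okS0 ok).2)
  ?(negbTE (visit_ok0S ok).2); last by case: (visit_ok00 ok).
- case/visit_okSS: ok => ta tb _; rewrite /cycle_arc.
  by repeat case: ifP => _; rewrite /= ?tl_rot ?ta ?tb ?eqxx.
- by case: ifP => _; rewrite /= ?(visit_okS0 ok).1 ?eqxx.
- by case: ifP => _; rewrite /= ?(visit_ok0S ok).1 ?eqxx.
Qed.

Lemma base_visit v i o x : visit_ok v i o -> x \in visit v i o -> base x = v.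
Proof. by move/all_base_visit/allP => allv /allv /eqP. Qed.

Lemma visit_sorted v i o : visit_ok v i o -> sorted adj2 (visit v i o).
Proof.
case: i => [a|]; case: o => [b|] ok; rewrite /visit; last by case: (visit_ok00 ok).
- case/visit_okSS: ok => ta tb ab.
  case: ifP => s4; last by case: ifP => s3 //=; rewrite andbT adj2_triangle ?ta ?tb.
  rewrite /cycle_arc; case: ifP => [|nadj].
    rewrite /= andbT; case/orP => /eqP ->; first by rewrite adj2_cycle ?ta.
    by rewrite adj2C adj2_cycle ?tb.
  rewrite (opposite_deg4 (a := a) (b := b)) ?ta ?tb ?nadj //= andbT adj2_cycle ?ta //.
  by rewrite adj2_cycle ?tl_rot ?ta.
- case/visit_okS0: ok => ta /negbTE ->; case: ifP => s3 //=.
  by rewrite andbT adj2C -ta adj2_terminal ?ta.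
- case/visit_ok0S: ok => tb /negbTE ->; case: ifP => s3 //=.
  by rewrite andbT -tb adj2_terminal ?tb.
Qed.

Lemma head_visit v i o : visit_ok v i o ->
  head (inl v) (visit v i o) = if i is Some a then att a else inl v.
Proof.
case: i => [a|]; case: o => [b|] ok; rewrite /visit; last by case: (visit_ok00 ok).
- case/visit_okSS: ok => ta tb _.
  case: ifP => s4; first by rewrite /cycle_arc; case: ifP => _; rewrite att_special ?ta ?s4.
  case: ifP => s3 /=; first by rewrite att_special; rewrite ?ta ?s3 ?orbT.
  by rewrite att_plain; rewrite ?ta ?s4 ?s3.
- case/visit_okS0: ok => ta /negbTE n4; rewrite n4.
  case: ifP => s3 /=; first by rewrite att_special; rewrite ?ta ?s3 ?orbT.
  by rewrite att_plain; rewrite ?ta ?n4 ?s3.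
- by case/visit_ok0S: ok => _ /negbTE ->; case: ifP.
Qed.

Lemma last_visit v i o : visit_ok v i o ->
  last (inl v) (visit v i o) = if o is Some b then att b else inl v.
Proof.
case: i => [a|]; case: o => [b|] ok; rewrite /visit; last by case: (visit_ok00 ok).
- case/visit_okSS: ok => ta tb _.
  case: ifP => s4; first by rewrite /cycle_arc; case: ifP => _; rewrite att_special ?tb ?s4.
  case: ifP => s3 /=; first by rewrite att_special; rewrite ?tb ?s3 ?orbT.
  by rewrite att_plain; rewrite ?tb ?s4 ?s3.
- by case/visit_okS0: ok => _ /negbTE ->; case: ifP.
- case/visit_ok0S: ok => tb /negbTE n4; rewrite n4.
  case: ifP => s3 /=; first by rewrite att_special; rewrite ?tb ?s3 ?orbT.
  by rewrite att_plain; rewrite ?tb ?n4 ?s3.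
Qed.

Lemma visit_uniq v i o : visit_ok v i o -> uniq (visit v i o).
Proof.
case: i => [a|]; case: o => [b|] ok; rewrite /visit; last by case: (visit_ok00 ok).
- case/visit_okSS: ok => ta tb ab.
  case: ifP => s4; last by case: ifP => s3 //=; rewrite inE ab.
  rewrite /cycle_arc; case: ifP => [_|nadj]; first by rewrite /= inE andbT.
  rewrite (opposite_deg4 (a := a) (b := b)) ?ta ?tb ?nadj //.
  have := uniq_orbit_deg4 (special4_deg (etrans (congr1 sp4 ta) s4)).
  rewrite /= !inE !(inj_eq inr_inj) => /and4P [/norP [/negbTE -> /norP [/negbTE -> _]]].
  by case/norP => /negbTE ->.
- by case/visit_okS0: ok => _ /negbTE ->; case: ifP.
- by case/visit_ok0S: ok => _ /negbTE ->; case: ifP.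
Qed.

Lemma visit_vert2 v i o : visit_ok v i o -> all vert2 (visit v i o).
Proof.
case: i => [a|]; case: o => [b|] ok; rewrite /visit; last by case: (visit_ok00 ok).
- case/visit_okSS: ok => ta tb _.
  case: ifP => s4; first by rewrite /cycle_arc; case: ifP => _ /=; rewrite ?tl_rot ta tb s4.
  by case: ifP => s3 /=; rewrite ?ta ?tb ?s3 ?s4 ?orbT.
- case/visit_okS0: ok => ta n4; rewrite (negbTE n4).
  by case: ifP => s3 /=; rewrite ?ta ?s3 ?n4 ?orbT.
- case/visit_ok0S: ok => tb n4; rewrite (negbTE n4).
  by case: ifP => s3 /=; rewrite ?tb ?s3 ?n4 ?orbT.
Qed.

Fixpoint lift_from (e : D) (p : seq D) : seq (V + D) :=
  match p with
  | [::] => visit (hd e) (Some (inv e)) None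
  | d :: p' => visit (hd e) (Some (inv e)) (Some d) ++ lift_from d p'
  end.

Definition lift_path (s : V) (p : seq D) : seq (V + D) :=
  if p is d :: p' then visit s None (Some d) ++ lift_from d p' else [:: inl s].

Lemma lift_from_nil e p : lift_from e p != [::].
Proof.
case: p => [|d p] /=; first exact: visit_nil.
by rewrite -size_eq0 size_cat addn_eq0 size_eq0 (negbTE (visit_nil _ _ _)).
Qed.

Lemma visit_ok_first s d : tl d = s -> ~~ sp4 s -> visit_ok s None (Some d).
Proof. by move=> <- n4; rewrite /visit_ok /= eqxx (negbTE n4). Qed.

Lemma visit_ok_inner e d : hd e = tl d -> tl e != hd d -> visit_ok (hd e) (Some (inv e)) (Some d).
Proof.
move=> ed ne; have ied : inv e != d.
  by apply/eqP => ie; move: ne; rewrite -ie /Defs.hd invK eqxx.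
by rewrite /visit_ok /= eqxx ed eqxx /= inE ied implybT.
Qed.

Lemma visit_ok_last e : ~~ sp4 (hd e) -> visit_ok (hd e) (Some (inv e)) None.
Proof. by move=> n4; rewrite /visit_ok /= eqxx (negbTE n4). Qed.

Lemma lift_from_ok e p : hpath e p -> uniq (tl e :: hd e :: map hd p) ->
  ~~ sp4 (hd (last e p)) ->
  [/\ {in lift_from e p, forall x, base x \in hd e :: map hd p},
      uniq (lift_from e p), all vert2 (lift_from e p), sorted adj2 (lift_from e p)
    & forall x, head x (lift_from e p) = att (inv e) /\
                last x (lift_from e p) = inl (hd (last e p))].
Proof.
elim: p e => [|d p IH] e /=.
  move=> _ _ /visit_ok_last ok; split; rewrite ?visit_uniq ?visit_vert2 ?visit_sorted //.
    by move=> x /(base_visit ok) ->; rewrite inE.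
  move=> x; move: (head_visit ok) (last_visit ok) (visit_nil (hd e) (Some (inv e)) None).
  by case: (visit _ _ _).
move=> /andP [/eqP ed hp] /andP [ne u] n4.
have ok : visit_ok (hd e) (Some (inv e)) (Some d).
  by apply: visit_ok_inner => //; apply: contraNneq ne => ->; rewrite !inE eqxx orbT.
have u' : uniq (tl d :: hd d :: map hd p) by rewrite -ed.
have [base_p uniq_p vert_p sorted_p ends_p] := IH d hp u' n4.
have notin_p : hd e \notin hd d :: map hd p by case/andP: u.
split.
- move=> x; rewrite mem_cat => /orP [/(base_visit ok) ->|/base_p]; first by rewrite mem_head.
  by move=> px; rewrite in_cons px orbT.
- rewrite cat_uniq visit_uniq //= uniq_p andbT; apply/hasPn => x /base_p px.
  by apply: contra notin_p => /(base_visit ok) <-.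
- by rewrite all_cat visit_vert2.
- apply: (sorted_cat_link (x := inl (hd e))); rewrite ?visit_sorted //.
  by move=> _ _; rewrite (last_visit ok) (ends_p _).1 adj2_att.
- move=> x; rewrite head_cat_nil ?visit_nil // last_cat_nil ?lift_from_nil //.
  rewrite (ends_p x).2; split=> //.
  move: (head_visit ok) (visit_nil (hd e) (Some (inv e)) (Some d)).
  by case: (visit _ _ _).
Qed.

Lemma npath2_intro s t S : S != [::] -> head (inl s) S = inl s -> sorted adj2 S ->
  last (inl s) S = inl t -> uniq S -> all vert2 S -> npath2 tl inv rot h s t S.
Proof. by case: S => [//|x S] _ /= -> -> -> -> ->; rewrite !eqxx. Qed.

Lemma lift_path_npath2 s t p : h s t -> gpath tl inv s t p ->
  npath2 tl inv rot h s t (lift_path s p).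
Proof.
move=> hst; case: p => [//|d p] /= /and4P [/eqP ts hp /eqP hl u].
have n4t : ~~ sp4 (hd (last d p)) by rewrite hl (terminal_not_special4 (h_sym hst)).
have u' : uniq (tl d :: hd d :: map hd p) by rewrite ts.
have [base_p uniq_p vert_p sorted_p ends_p] := lift_from_ok hp u' n4t.
have ok := visit_ok_first ts (terminal_not_special4 hst).
apply: npath2_intro.
- by rewrite -size_eq0 size_cat addn_eq0 size_eq0 (negbTE (visit_nil _ _ _)).
- by rewrite head_cat_nil ?visit_nil // (head_visit ok).
- apply: (sorted_cat_link (x := inl s)); rewrite ?visit_sorted //.
  by move=> _ _; rewrite (last_visit ok) (ends_p _).1 adj2_att.
- by rewrite last_cat_nil ?lift_from_nil // (ends_p _).2 hl.
- rewrite cat_uniq visit_uniq //= uniq_p andbT; apply/hasPn => x /base_p px.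
  by apply/negP => /(base_visit ok) xs; move: u; rewrite /= -xs px.
- by rewrite all_cat visit_vert2.
Qed.
Definition on_path (P : seq D) : pred D := [pred u | (u \in P) || (inv u \in P)].

(* P enters the node tl b by the dart a (reversing its (k-1)-st dart) and
   leaves it by its k-th dart b. *)
Definition visit_at (x0 : D) (P : seq D) (a b : D) :=
  exists k, [/\ 0 < k, k < size P, a = inv (nth x0 P k.-1) & b = nth x0 P k].

Lemma lift_from_visit x0 e p x : hpath e p -> uniq (tl e :: hd e :: map hd p) ->
  ~~ sp4 (hd (last e p)) -> x \in lift_from e p ->
  exists v i o, [/\ x \in visit v i o, visit_ok v i o,
    {subset visit_darts i o <= on_path (e :: p)},
    (i == None) || (o == None) -> v = hd (last e p)
  & forall a b, i = Some a -> o = Some b -> visit_at x0 (e :: p) a b].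
Proof.
elim: p e => [|d p IH] e /=.
  move=> _ _ n4 xv; exists (hd e), (Some (inv e)), None; split=> //.
  - exact: visit_ok_last.
  - by move=> w; rewrite !inE => /eqP ->; rewrite invK eqxx orbT.
move=> /andP [/eqP ed hp] /andP [ne u] n4; rewrite mem_cat => /orP [xv|].
  exists (hd e), (Some (inv e)), (Some d); split=> //.
  - by apply: visit_ok_inner => //; apply: contraNneq ne => ->; rewrite !inE eqxx orbT.
  - by move=> w; rewrite !inE => /orP [] /eqP ->; rewrite ?invK eqxx ?orbT.
  - by move=> a b [<-] [<-]; exists 1.
have u' : uniq (tl d :: hd d :: map hd p) by rewrite -ed.
move=> /(IH d hp u' n4) [v [i [o [xv ok sub ends at_k]]]].
exists v, i, o; split=> //.
- by move=> w /sub; rewrite !inE; case/orP => ->; rewrite !orbT.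
- move=> a b ia ob; have [[|k] [//= _ kp -> ->]] := at_k a b ia ob.
  by exists k.+2.
Qed.

Lemma lift_path_visit x0 s t P x : h s t -> gpath tl inv s t P -> x \in lift_path s P ->
  exists v i o, [/\ x \in visit v i o, visit_ok v i o, {subset visit_darts i o <= on_path P},
    (i == None) || (o == None) -> (v == s) || (v == t)
  & forall a b, i = Some a -> o = Some b -> visit_at x0 P a b].
Proof.
move=> hst; case: P => [//|d p] /= /and4P [/eqP ts hp /eqP hl u].
have n4t : ~~ sp4 (hd (last d p)) by rewrite hl (terminal_not_special4 (h_sym hst)).
have u' : uniq (tl d :: hd d :: map hd p) by rewrite ts.
rewrite mem_cat => /orP [xv|/(lift_from_visit x0 hp u' n4t) [v [i [o [xv ok sub ends at_k]]]]].
  exists s, None, (Some d); split=> //.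
  - exact: visit_ok_first ts (terminal_not_special4 hst).
  - by move=> w; rewrite !inE => /eqP ->; rewrite eqxx.
  - by move=> _; rewrite eqxx.
exists v, i, o; split=> //.
by move/ends => ->; rewrite hl eqxx orbT.
Qed.

(** * Lifts of an uncrossed flow are node-disjoint *)

Lemma cycle_arc_adjacent a b : degG (tl b) = 4 -> tl a = tl b -> a != b -> a != rot (rot b) ->
  cycle_arc a b = [:: inr a; inr b].
Proof.
move=> deg4 ta ab a2; rewrite /cycle_arc.
move: (mem_orbit_deg4 deg4 ta); rewrite !inE (negbTE ab) (negbTE a2) /=.
by case/orP => /eqP ->; rewrite ?(rot4_deg4 deg4) eqxx ?orbT.
Qed.

Lemma visits_disjoint_special4 v aP bP aQ bQ x : sp4 v ->
  all (fun d => tl d == v) [:: aP; bP; aQ; bQ] -> uniq [:: aP; bP; aQ; bQ] ->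
  ~~ alternate (orbit rot bP) aP aQ bP bQ -> ~~ alternate (orbit rot bQ) aQ aP bQ bP ->
  x \in visit v (Some aP) (Some bP) -> x \in visit v (Some aQ) (Some bQ) -> False.
Proof.
move=> s4 /and4P [/eqP ta /eqP tb /eqP tc /andP [/eqP te _]].
rewrite /= !inE !negb_or -!andbA => /and4P [n1 n2 n3 /and4P [n4 n5 n6 _]] nP nQ.
have deg4 : degG v = 4 by apply: special4_deg.
have opP : aP != rot (rot bP).
  have deg4b : degG (tl bP) = 4 by rewrite tb.
  rewrite -(alternate_deg4 deg4b (y1 := aQ) (y2 := bQ)) //.
    by rewrite /= !inE !negb_or n1 n2 n3 n5 n6 (eq_sym aQ bP) n4.
  by rewrite /= ta tb tc te eqxx.
have opQ : aQ != rot (rot bQ).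
  have deg4e : degG (tl bQ) = 4 by rewrite te.
  rewrite -(alternate_deg4 deg4e (y1 := aP) (y2 := bP)) //.
    by rewrite /= !inE !negb_or (eq_sym aQ aP) n2 n6 (eq_sym aQ bP) n4 n3 n1 (eq_sym bQ bP) n5.
  by rewrite /= ta tb tc te eqxx.
rewrite /visit s4 !cycle_arc_adjacent ?ta ?tb ?tc ?te //.
by rewrite !inE => /orP [] /eqP -> /orP [] /eqP [] e; subst; rewrite ?eqxx in n1 n2 n3 n4 n5 n6.
Qed.

Lemma size_visit_darts_ok v i o : visit_ok v i o ->
  size (visit_darts i o) = 2 - ((i == None) || (o == None)).
Proof. by case: i o => [a|] [b|] //= /visit_ok00. Qed.

Lemma mem_visit_plain v i o x : ~~ sp4 v -> x \in visit v i o ->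
  (x = inl v /\ (i == None) || (o == None) || ~~ sp3 v) \/
  (exists2 d, x = inr d & d \in visit_darts i o).
Proof.
move=> n4; rewrite /visit (negbTE n4).
case: ifP => s3; last by rewrite inE => /eqP ->; left; rewrite orbT.
case: i => [a|]; case: o => [b|]; rewrite !inE ?orbF.
- by case/orP => /eqP ->; right; [exists a|exists b]; rewrite // !inE eqxx ?orbT.
- by case/orP => /eqP ->; [right; exists a|left]; rewrite ?inE ?eqxx.
- by case/orP => /eqP ->; [left|right; exists b]; rewrite ?inE ?eqxx.
- by move/eqP ->; left.
Qed.

Section TwoVisits.
Variables (v : V) (iP oP iQ oQ : option D).
Hypotheses (okP : visit_ok v iP oP) (okQ : visit_ok v iQ oQ).
Hypothesis darts_disjoint : uniq (visit_darts iP oP ++ visit_darts iQ oQ).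
Hypothesis not_both_ends : ~~ (((iP == None) || (oP == None)) && ((iQ == None) || (oQ == None))).

Lemma visits_disjoint_special3 x : sp3 v ->
  x \in visit v iP oP -> x \in visit v iQ oQ -> False.
Proof.
move=> s3; have n4 : ~~ sp4 v by apply: contraL s3 => /special4_not3.
move=> /(mem_visit_plain n4) [[-> endP]|[d -> dP]] /(mem_visit_plain n4) [[eQ endQ]|[d' eQ dQ]].
- by move: not_both_ends; rewrite s3 !orbF in endP endQ; rewrite endP endQ.
- by move/eqP: eQ.
- by move/eqP: eQ.
- case: eQ dQ => <- dQ; move: darts_disjoint; rewrite cat_uniq => /and3P [_ /hasPn /(_ d dQ)].
  by rewrite dP.
Qed.

Lemma plain_node_deg : ~~ sp4 v -> ~~ sp3 v -> degG v <= 3 /\ (degH h v = 1 -> degG v <= 2).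
Proof.
rewrite /special4 /special3 => n4 n3; have := degG_le4 v; have := degH_le1 v.
case: (degH h v) n4 n3 (@degG_terminal v) => [|[|//]] /=; rewrite ?eqxx /=; lia.
Qed.

Lemma visits_plain_node :
  ((iP == None) || (oP == None) -> degH h v = 1) ->
  ((iQ == None) || (oQ == None) -> degH h v = 1) -> ~~ sp4 v -> ~~ sp3 v -> False.
Proof.
move=> endP endQ n4 n3; have [le3 le2] := plain_node_deg n4 n3.
have : size (visit_darts iP oP ++ visit_darts iQ oQ) <= degG v.
  by apply: uniq_darts_at_le; rewrite // all_cat; case/and4P: okP => -> _ _ _; case/and4P: okQ.
rewrite size_cat (size_visit_darts_ok okP) (size_visit_darts_ok okQ).
move: not_both_ends endP endQ.
case: ((iP == None) || (oP == None)); case: ((iQ == None) || (oQ == None)) => //= _.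
- by move=> /(_ isT) /le2; lia.
- by move=> _ /(_ isT) /le2; lia.
- by lia.
Qed.

Lemma visits_disjoint x :
  ((iP == None) || (oP == None) -> degH h v = 1) ->
  ((iQ == None) || (oQ == None) -> degH h v = 1) ->
  (forall aP bP aQ bQ, iP = Some aP -> oP = Some bP -> iQ = Some aQ -> oQ = Some bQ ->
     sp4 v -> ~~ alternate (orbit rot bP) aP aQ bP bQ /\ ~~ alternate (orbit rot bQ) aQ aP bQ bP) ->
  x \in visit v iP oP -> x \in visit v iQ oQ -> False.
Proof.
move=> endP endQ no_alt xP xQ.
have [s4|n4] := boolP (sp4 v); last first.
  have [s3|n3] := boolP (sp3 v); first exact: visits_disjoint_special3 s3 xP xQ.
  exact: visits_plain_node endP endQ n4 n3.
have inner (i o : option D) : ((i == None) || (o == None) -> degH h v = 1) ->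
    exists a b, i = Some a /\ o = Some b.
  rewrite (special4_degH s4).
  by case: i o => [a|] [b|] ends; [exists a, b | have := ends isT | have := ends isT
    | have := ends isT].
have [aP [bP [eiP eoP]]] := inner _ _ endP; have [aQ [bQ [eiQ eoQ]]] := inner _ _ endQ.
have [nP nQ] := no_alt _ _ _ _ eiP eoP eiQ eoQ s4.
move: okP okQ darts_disjoint xP xQ; rewrite eiP eoP eiQ eoQ => okP' okQ' uPQ.
apply: visits_disjoint_special4 s4 _ uPQ nP nQ.
by case/and4P: okP' => /= /and3P [-> -> _] _ _ _; case/and4P: okQ' => /= /and3P [-> -> _].
Qed.

End TwoVisits.

Lemma edisj_on_path P Q u : edisj inv P Q -> u \in on_path P -> u \in on_path Q -> False.
Proof.
move=> /allP ed; rewrite !inE => uP uQ.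
case/orP: uP => /ed /andP [/negP n1 /negP n2]; case/orP: uQ => uq.
- exact: n1 uq.
- exact: n2 uq.
- by apply: n2; rewrite invK.
- exact: n1 uq.
Qed.

Lemma edisj_sym P Q : edisj inv P Q -> edisj inv Q P.
Proof.
move=> ed; apply/allP => u uQ; apply/andP; split; apply/negP => uP.
- by apply: (edisj_on_path (u := u) ed); rewrite inE ?uP ?uQ.
- by apply: (edisj_on_path (u := inv u) ed); rewrite inE ?uP ?invK ?uQ ?orbT.
Qed.

Lemma alternate_visits_cross x0 P Q aP bP aQ bQ : edisj inv P Q ->
  visit_at x0 P aP bP -> visit_at x0 Q aQ bQ -> tl bP = tl bQ ->
  alternate (orbit rot bP) aP aQ bP bQ -> cross tl inv rot P Q.
Proof.
move=> ed [k [k0 kP -> ->]] [m [m0 mQ -> ->]] te alt.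
have onP n : n < size P -> nth x0 P n \in on_path P by move=> nP; rewrite inE mem_nth.
have onQ n : n < size Q -> nth x0 Q n \in on_path Q by move=> nQ; rewrite inE mem_nth.
have onQ' n : n < size Q -> inv (nth x0 Q n) \in on_path Q.
  by move=> nQ; rewrite inE invK mem_nth ?orbT.
have k1P : k.-1 < size P by rewrite (leq_ltn_trans (leq_pred k)).
have m1Q : m.-1 < size Q by rewrite (leq_ltn_trans (leq_pred m)).
left; exists x0, k, k, m, m; rewrite !subnn take0; split; first by rewrite k0 m0 kP mQ !leqnn.
split; first exact: te.
split=> //; split; last exact: alt.
split; apply/negP => /eqP e.
- by apply: (edisj_on_path ed (onP _ k1P)); rewrite e onQ.
- by apply: (edisj_on_path ed (onP _ kP)); rewrite e onQ.
- by apply: (edisj_on_path ed (onP _ k1P)); rewrite e onQ'.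
- by apply: (edisj_on_path ed (onP _ kP)); rewrite e onQ'.
Qed.

Lemma lifts_disjoint s t s' t' P Q : h s t -> h s' t' -> s' != s -> s' != t ->
  gpath tl inv s t P -> gpath tl inv s' t' Q -> edisj inv P Q ->
  ~ cross tl inv rot P Q -> ~ cross tl inv rot Q P -> ndisj (lift_path s P) (lift_path s' Q).
Proof.
move=> hst hst' ss' ts' gP gQ ed ncPQ ncQP.
have x0 : D by move: gP; case: (P) => [//|d _ _]; exact: d.
apply/allP => x xP; apply/negP => xQ.
have [v [iP [oP [xvP okP dP endP atP]]]] := lift_path_visit x0 hst gP xP.
have [w [iQ [oQ [xvQ okQ dQ endQ atQ]]]] := lift_path_visit x0 hst' gQ xQ.
have evw : w = v by rewrite -(base_visit okP xvP) (base_visit okQ xvQ).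
subst w; have /andP [st' tt'] := matching_other_ends hst hst' ss' ts'.
apply: (visits_disjoint okP okQ _ _ _ _ _ xvP xvQ).
- rewrite cat_uniq; case/and4P: okP => _ -> _ _; case/and4P: okQ => _ -> _ _ /=.
  rewrite andbT; apply/hasPn => u uQ; apply/negP => uP.
  exact: edisj_on_path ed (dP _ uP) (dQ _ uQ).
- apply/negP => /andP [/endP vP /endQ vQ].
  case/orP: vP => /eqP ev; case/orP: vQ => /eqP; rewrite ev => e;
    by rewrite e eqxx ?(eq_sym s') in ss' ts' st' tt'.
- move/endP => /orP [] /eqP ->; first exact: degH_terminal hst.
  exact: degH_terminal (h_sym hst).
- move/endQ => /orP [] /eqP ->; first exact: degH_terminal hst'.
  exact: degH_terminal (h_sym hst').
- move=> aP bP aQ bQ eiP eoP eiQ eoQ _.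
  have [atPab atQab] := (atP _ _ eiP eoP, atQ _ _ eiQ eoQ).
  have tb : tl bP = tl bQ.
    by move: okP okQ; rewrite eiP eoP eiQ eoQ => /visit_okSS [_ -> _] /visit_okSS [_ -> _].
  split; apply/negP => alt.
  + exact: ncPQ (alternate_visits_cross ed atPab atQab tb alt).
  + exact: ncQP (alternate_visits_cross (edisj_sym ed) atQab atPab (esym tb) alt).
Qed.

Lemma uncrossed_node_disjoint : uncrossed_flow tl inv rot h -> node_disjoint_flow2 tl inv rot h.
Proof.
case=> F [gF dF]; exists (fun s t => lift_path s (F s t)); split.
  by move=> s t hst; apply/lift_path_npath2/gF.
move=> s t s' t' hst hst' ss' ts'.
have /andP [st' _] := matching_other_ends hst hst' ss' ts'.
have [ed ncPQ] := dF _ _ _ _ hst hst' ss' ts'.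
have ss : s != s' by rewrite eq_sym.
have [_ ncQP] := dF _ _ _ _ hst' hst ss st'.
exact: lifts_disjoint hst hst' ss' ts' (gF _ _ hst) (gF _ _ hst') ed ncPQ ncQP.
Qed.

(** * Contracting chordless paths of G'' *)

Definition edge_dart (x y : V + D) : seq D :=
  if [pick d | (att d == x) && (att (inv d) == y)] is Some d then [:: d] else [::].

Lemma mem_edge_dart x y d : d \in edge_dart x y -> att d = x /\ att (inv d) = y.
Proof.
rewrite /edge_dart; case: pickP => [d' /andP [/eqP ax /eqP ay]|//].
by rewrite inE => /eqP ->.
Qed.

Lemma edge_dart_same_base x y : base x = base y -> edge_dart x y = [::].
Proof.
rewrite /edge_dart; case: pickP => [d /andP [/eqP ax /eqP ay]|//] exy.
by move: (tl_inv d); rewrite -base_att ay -exy -ax base_att eqxx.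
Qed.

Lemma edge_dart_adj2 x y : adj2 x y -> base x != base y ->
  exists d, [/\ edge_dart x y = [:: d], att d = x & att (inv d) = y].
Proof.
move=> a n; have [d [ax ay]] := adj2_att_inv a n.
rewrite /edge_dart; case: pickP => [d' /andP [/eqP ax' /eqP ay']|/(_ d)]; first by exists d'.
by rewrite ax ay !eqxx.
Qed.

Fixpoint contract_from (x : V + D) (S : seq (V + D)) : seq D :=
  if S is y :: S' then edge_dart x y ++ contract_from y S' else [::].

Definition contract (S : seq (V + D)) : seq D := if S is x :: S' then contract_from x S' else [::].

Lemma mem_contract_from x S d : d \in contract_from x S ->
  att d \in x :: S /\ att (inv d) \in x :: S.
Proof.
elim: S x => [|y S IH] x //=; rewrite mem_cat => /orP [/mem_edge_dart [-> ->]|/IH [h1 h2]].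
  by rewrite !inE !eqxx orbT.
by split; rewrite in_cons ?h1 ?h2 orbT.
Qed.

Lemma mem_contract S d : d \in contract S -> att d \in S /\ att (inv d) \in S.
Proof. by case: S => [//|x S] /mem_contract_from. Qed.

Lemma hd_contract_from x S d : d \in contract_from x S -> hd d \in map base S.
Proof.
elim: S x => [|y S IH] x //=; rewrite mem_cat => /orP [/mem_edge_dart [_ ay]|/IH h1].
  by rewrite in_cons -ay base_att eqxx.
by rewrite in_cons h1 orbT.
Qed.

Lemma contract_from_path x S : path adj2 x S ->
  match contract_from x S with
  | [::] => base (last x S) = base x
  | d :: p => [/\ tl d = base x, hpath d p & hd (last d p) = base (last x S)]
  end.
Proof.
elim: S x => [|y S IH] x //= /andP [a pS]; have := IH _ pS.
have [exy|nxy] := eqVneq (base x) (base y).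
  by rewrite (edge_dart_same_base exy) /= -exy; case: (contract_from y S).
have [d [-> ax ay]] := edge_dart_adj2 a nxy; rewrite cat1s.
case: (contract_from y S) => [|d' p'] /=.
  by move=> ->; split => //; [rewrite -ax base_att | rewrite -ay base_att].
case=> t1 p1 l1; split => //; first by rewrite -ax base_att.
by rewrite t1 -ay base_att /Defs.hd eqxx.
Qed.

Definition gadgets_contiguous x0 (S : seq (V + D)) := forall i j k, i < j -> j < k -> k < size S ->
  base (nth x0 S i) = base (nth x0 S k) -> base (nth x0 S j) = base (nth x0 S i).

Lemma contract_from_uniq x0 x S : path adj2 x S -> gadgets_contiguous x0 (x :: S) ->
  uniq (base x :: map hd (contract_from x S)).
Proof.
elim: S x => [|y S IH] x //= /andP [a pS] C.
have C' : gadgets_contiguous x0 (y :: S) by move=> i j k ij jk kS; exact: (C i.+1 j.+1 k.+1).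
have [exy|nxy] := eqVneq (base x) (base y).
  by rewrite (edge_dart_same_base exy) /= exy; apply: IH.
have [d [-> ax ay]] := edge_dart_adj2 a nxy.
have hdy : hd d = base y by rewrite -ay base_att.
rewrite /= hdy; have := IH _ pS C'; rewrite /= => ->; rewrite andbT.
rewrite in_cons (negbTE nxy) /=; apply/negP => /mapP [d' /hd_contract_from /mapP [z zS ez] e'].
have := C 0 1 (index z S).+2 erefl erefl.
rewrite /= ltnS ltnS index_mem zS nth_index // -ez -e' => /(_ erefl erefl) ey.
by rewrite ey eqxx in nxy.
Qed.

Lemma npath2_seq s t S : npath2 tl inv rot h s t S ->
  [/\ S != [::], head (inl s) S = inl s, sorted adj2 S, last (inl s) S = inl t
    & uniq S /\ all vert2 S].
Proof. by case: S => [//|x S]; rewrite /npath2 => /and5P [/eqP -> pS /eqP l u av]. Qed.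

Lemma npath2_nth s t S : npath2 tl inv rot h s t S ->
  [/\ nth (inl s) S 0 = inl s, nth (inl s) S (size S).-1 = inl t, uniq S,
      forall m, m.+1 < size S -> adj2 (nth (inl s) S m) (nth (inl s) S m.+1)
    & forall m, m < size S -> vert2 (nth (inl s) S m)].
Proof.
case: S => [//|x S]; rewrite /npath2 => /and5P [/eqP -> pS /eqP l u /allP av].
split=> //; first by rewrite nth_last /= l.
- by move=> m mS; move/(pathP (inl s)): pS => /(_ m mS).
- by move=> m mS; rewrite av // mem_nth.
Qed.

Lemma same_gadget_adj2 X Y : vert2 X -> vert2 Y -> base X = base Y -> X != Y ->
  ~~ sp4 (base X) -> adj2 X Y.
Proof.
case: X => [x|a] /=; case: Y => [y|b] /= vX vY; rewrite ?(inj_eq inl_inj) ?(inj_eq inr_inj).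
- by move=> ->; rewrite eqxx.
- move=> exb _ _; rewrite exb in vX *; move: vY; rewrite (negbTE vX) /= => s3.
  exact: adj2_terminal.
- move=> eay _ _; rewrite -eay in vY *; move: vX; rewrite (negbTE vY) /= => s3.
  by rewrite adj2C adj2_terminal.
- move=> tab ab n4; move: vX; rewrite (negbTE n4) /= => s3.
  exact: adj2_triangle s3 (esym tab) ab.
Qed.

Section ChordlessPath.
Variables (s t : V) (S : seq (V + D)).
Hypothesis npS : npath2 tl inv rot h s t S.
Hypothesis chS : chordless adj2 (inl s) S.
Local Notation node i := (nth (inl s) S i).

Lemma neighbours_in_path l a : node l = inr a -> sp4 (tl a) ->
  [/\ 0 < l, l.+1 < size S, adj2 (inr a) (node l.-1) & adj2 (inr a) (node l.+1)].
Proof.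
move=> ela s4; have [S0 Slast u adj _] := npath2_nth npS.
have lS : l < size S.
  by rewrite ltnNge; apply/negP => /(nth_default (inl s)); rewrite ela.
have l0 : 0 < l by case: (posnP l) ela => // ->; rewrite S0.
have l1 : l.+1 < size S.
  rewrite ltn_neqAle lS andbT; apply/eqP => e.
  by move: Slast; rewrite -e /= ela.
split=> //; last by rewrite -ela adj.
by have := adj l.-1; rewrite prednK // ela adj2C => ->.
Qed.

Lemma chordless_leaves_cycle l k a b : l.+1 < k -> k < size S ->
  node l = inr a -> node k = inr b -> sp4 (tl a) -> tl b = tl a ->
  base (node l.+1) != tl a -> False.
Proof.
move=> lk kS ela ekb s4 tb nl1; have [_ _ u _ _] := npath2_nth npS.
have [l0 l1S a0 a1] := neighbours_in_path ela s4.
have rot4a : rot (rot (rot (rot a))) = a by rewrite rot4_deg4 ?special4_deg.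
have nab : ~~ adj2 (inr a) (inr b) by rewrite -ela -ekb chS.
have lk' : l < k := ltn_trans (ltnSn l) lk.
have nlk : node l != node k by rewrite nth_uniq ?(ltn_trans lk') // neq_ltn lk'.
have eb : b = rot (rot a).
  apply: opposite_deg4 => //; first by apply: contraNneq nlk => eab; rewrite ela ekb eab.
  apply/negP => /orP [] /eqP e; move: nab; rewrite e; first by rewrite adj2_cycle.
  by rewrite adj2C adj2_cycle // tb.
have e1 : node l.+1 = att (inv a).
  by case: (adj2_cycle_nbr s4 a1) nl1 => [//|->|[z -> rz]] /=; rewrite -?rz !tl_rot eqxx.
have chord_before : ~~ adj2 (node l.-1) (inr b).
  by rewrite -ekb; apply: chS => //; rewrite prednK.
(* The successor of inr a is its neighbour outside the cycle, so its
   predecessor is a cycle neighbour, adjacent to the opposite node inr b. *)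
case: (adj2_cycle_nbr s4 a0) => [e0|e0|[z e0 rz]].
- have : node l.-1 == node l.+1 by rewrite e0 e1.
  rewrite nth_uniq ?(leq_ltn_trans (leq_pred l) (ltnW l1S)) //.
  by move/eqP; lia.
- by move: chord_before; rewrite e0 eb adj2_cycle // tl_rot.
- have ez : z = rot (rot (rot a)) by apply: (@perm_inj _ rot); rewrite rz rot4a.
  by move: chord_before; rewrite e0 eb ez adj2C adj2_cycle // !tl_rot.
Qed.

Lemma chordless_contiguous : gadgets_contiguous (inl s) S.
Proof.
move=> i j k ij jk kS eik; apply/eqP; apply: contraTT isT => nji.
have [_ _ u _ vert] := npath2_nth npS.
have [l [il lj fl nfl]] :=
  exists_switch (f := fun l => base (node l) == base (node i)) (ltnW ij) (eqxx _) nji.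
have lk : l.+1 < k by apply: leq_ltn_trans jk.
have lS : l < size S by rewrite (ltn_trans _ kS) // (ltn_trans (ltnSn l)).
have nadj : ~~ adj2 (node l) (node k) by apply: chS.
have elk : base (node l) = base (node k) by rewrite (eqP fl).
have [s4|n4] := boolP (sp4 (base (node l))); last first.
  move: nadj; rewrite same_gadget_adj2 ?vert //.
  by rewrite nth_uniq // neq_ltn (ltn_trans (ltnSn l) lk).
have inr_of m : m < size S -> base (node m) = base (node l) -> exists a, node m = inr a.
  move=> mS; have := vert m mS.
  by case: (node m) => [x /= vx ex|a _ _]; [move: vx; rewrite ex s4 | exists a].
have [a ela] := inr_of l lS erefl; have [b ekb] := inr_of k kS (esym elk).
have ta : tl a = base (node l) by rewrite ela.
have tb : tl b = tl a by rewrite ta elk ekb.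
have nl1 : base (node l.+1) != tl a by rewrite ta (eqP fl).
by case: (chordless_leaves_cycle lk kS ela ekb _ tb nl1); rewrite ta.
Qed.

Lemma cycle_neighbour_in_path a : inr a \in S -> sp4 (tl a) ->
  (inr (rot a) \in S) || (inr (rot (rot (rot a))) \in S).
Proof.
move=> aS s4; have [_ _ u _ _] := npath2_nth npS.
have ela : node (index (inr a) S) = inr a by apply: nth_index.
have [l0 l1S a0 a1] := neighbours_in_path ela s4; set l := index _ _ in l0 l1S a0 a1.
have m0 : node l.-1 \in S by rewrite mem_nth // (leq_ltn_trans (leq_pred l)) // ltnW.
have m1 : node l.+1 \in S by rewrite mem_nth.
have rot3K z : rot z = a -> z = rot (rot (rot a)).
  by move=> rz; apply: (@perm_inj _ rot); rewrite rz rot4_deg4 ?special4_deg.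
case: (adj2_cycle_nbr s4 a0) => [e0|e0|[z e0 /rot3K ez]].
- case: (adj2_cycle_nbr s4 a1) => [e1|e1|[z e1 /rot3K ez]].
  + have : node l.-1 == node l.+1 by rewrite e0 e1.
    rewrite nth_uniq ?(leq_ltn_trans (leq_pred l) (ltnW l1S)) //.
    by move/eqP; lia.
  + by rewrite -e1 m1.
  + by rewrite -ez -e1 m1 orbT.
- by rewrite -e0 m0.
- by rewrite -ez -e0 m0 orbT.
Qed.

Lemma contract_gpath : h s t -> gpath tl inv s t (contract S).
Proof.
move=> hst; have C := chordless_contiguous.
case: S npS C => [//|x S'] NP C; have := NP.
rewrite /npath2 => /and5P [/eqP ex pS /eqP l _ _].
have := contract_from_path pS; have := contract_from_uniq pS C; rewrite /= ex.
case: (contract_from (inl s) S') => [|d p'] /=.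
  by move=> _; rewrite -ex l /= => e; move: (h_neq hst); rewrite e eqxx.
by move=> u [-> hp hl]; rewrite eqxx hp hl -ex l eqxx.
Qed.

End ChordlessPath.

Lemma crossing_dir_visits P Q : edisj inv P Q -> crossing_dir tl inv rot P Q ->
  exists x0 aP bP aQ bQ,
    [/\ visit_at x0 P aP bP, visit_at x0 Q aQ bQ & alternate (orbit rot bP) aP aQ bP bQ].
Proof.
move=> ed [x0 [i [j [a [b [[/andP [i0 ij] jP /andP [a0 ab] bQ eq] [_ [same [_ alt]]]]]]]]].
have iP : i < size P by apply: leq_ltn_trans jP.
have ej : j = i.
  apply/eqP; rewrite eqn_leq ij andbT leqNgt; apply/negP => lt.
  have := same 0; rewrite subn_gt0 lt !addn0 => /(_ isT) e.
  apply: (edisj_on_path (u := nth x0 P i) ed); rewrite inE; first by rewrite mem_nth.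
  by rewrite e mem_nth // (leq_ltn_trans ab).
subst j; have eb : b = a by apply/eqP; rewrite eqn_leq ab andbT -subn_eq0 -eq subnn.
subst b; move: alt; rewrite subnn take0 => alt.
by exists x0, (inv (nth x0 P i.-1)), (nth x0 P i), (inv (nth x0 Q a.-1)), (nth x0 Q a); split=> //;
  [exists i | exists a].
Qed.

Lemma alternate_at_special4 x1 y1 x2 y2 : alternate (orbit rot x2) x1 y1 x2 y2 ->
  [/\ sp4 (tl x2), tl y1 = tl x2, tl y2 = tl x2
    & forall w, w \in [:: rot x2; rot (rot (rot x2))] -> (w == y1) || (w == y2)].
Proof.
move=> alt; have /and3P [u al _] := alt.
have al' : all (fun e => tl e == tl x2) [:: x1; y1; x2; y2].
  by apply/allP => e em; move/allP: al => /(_ e em); rewrite mem_orbit_rot.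
have deg4 : degG (tl x2) = 4.
  by apply/eqP; rewrite eqn_leq degG_le4 (uniq_darts_at_le u al').
have s4 : sp4 (tl x2).
  rewrite /special4 deg4 eqxx andbT; have := degH_le1 (tl x2).
  by case E: (degH h (tl x2)) => [//|[|//]] _; have := degG_terminal E; rewrite deg4.
have ex1 : x1 = rot (rot x2) by apply/eqP; rewrite -(alternate_deg4 deg4 u).
have /and4P [_ /eqP ty1 _ /andP [/eqP ty2 _]] := al'.
split=> //.
have sub : {subset [:: x1; y1; x2; y2] <= orbit rot x2} by apply/allP.
have size_le : size (orbit rot x2) <= size [:: x1; y1; x2; y2] by rewrite size_orbit_rot deg4.
have [_ cover] := uniq_min_size u sub size_le.
have := uniq_orbit_deg4 deg4.
rewrite /= !inE !negb_or => /and4P [/and3P [n1 n2 n3] /andP [n4 n5] n6 _].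
move=> w; rewrite !inE => ww.
have : w \in orbit rot x2.
  by rewrite (orbit_deg4 deg4) !inE; case/orP: ww => ->; rewrite ?orbT.
rewrite -cover !inE ex1; case/orP: ww => /eqP ->.
  by rewrite (negbTE n4) (eq_sym (rot x2) x2) (negbTE n1).
by rewrite (eq_sym _ (rot (rot x2))) (negbTE n6) (eq_sym _ x2) (negbTE n3).
Qed.

Lemma contract_not_crossing_dir s t P2 Q2 p q : npath2 tl inv rot h s t P2 ->
  {in p, forall d, att d \in P2} -> {in q, forall d, att d \in Q2 /\ att (inv d) \in Q2} ->
  ndisj P2 Q2 -> edisj inv p q -> ~ crossing_dir tl inv rot p q.
Proof.
move=> NP attP attQ /allP dis ed /(crossing_dir_visits ed).
move=> [x0 [aP [bP [aQ [bQ [[k [_ kp _ ebP]] [m [m0 mq eaQ ebQ]] alt]]]]]].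
subst bP aQ bQ.
have [s4 ty1 ty2 cover] := alternate_at_special4 alt.
have inrQ w : tl w = tl (nth x0 p k) -> att w \in Q2 -> inr w \in Q2.
  by move=> tw; rewrite att_special // tw s4.
have y1Q : inr (inv (nth x0 q m.-1)) \in Q2.
  by apply: inrQ ty1 _; case: (attQ _ (mem_nth x0 (leq_ltn_trans (leq_pred m) mq))).
have y2Q : inr (nth x0 q m) \in Q2 by apply: inrQ ty2 _; case: (attQ _ (mem_nth x0 mq)).
have x2P : inr (nth x0 p k) \in P2 by rewrite -att_special ?s4 // attP // mem_nth.
have {}cover w : w \in [:: rot (nth x0 p k); rot (rot (rot (nth x0 p k)))] -> inr w \in P2 -> False.
  move=> /cover /orP [] /eqP -> /dis; by [rewrite y1Q | rewrite y2Q].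
case/orP: (cycle_neighbour_in_path NP x2P s4); apply: cover; rewrite !inE eqxx ?orbT //.
Qed.

Lemma exists_chordless_npath2 s t S : npath2 tl inv rot h s t S ->
  exists S', [/\ npath2 tl inv rot h s t S', {subset S' <= S} & chordless adj2 (inl s) S'].
Proof.
move=> /npath2_seq [Sne Sh Ss Sl [Su Sv]].
have [S' [subS sS' chS' ne' [hd' last']]] := chordless_subseq (inl s) Ss.
have memS' := mem_subseq subS.
exists S'; split=> //; apply: npath2_intro; rewrite ?ne' ?hd' ?last' ?(subseq_uniq subS) //.
by apply/allP => x /memS'; apply/allP.
Qed.

Lemma node_disjoint_uncrossed : node_disjoint_flow2 tl inv rot h -> uncrossed_flow tl inv rot h.
Proof.
case=> F2 [nF dF].
pose good s t (S : seq (V + D)) := h s t ->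
  [/\ npath2 tl inv rot h s t S, {subset S <= F2 s t} & chordless adj2 (inl s) S].
have [G HG] : exists G : V -> V -> seq (V + D), forall s t, good s t (G s t).
  apply: (@fin_all_exists _ _ (fun s g => forall t, good s t (g t))) => s.
  apply: (@fin_all_exists _ _ (good s)) => t.
  rewrite /good; case hst: (h s t); last by exists [::].
  by have [S' ?] := exists_chordless_npath2 (nF _ _ hst); exists S'.
exists (fun s t => contract (G s t)); split.
  by move=> s t hst; have [nG _ cG] := HG s t hst; apply: contract_gpath.
move=> s t s' t' hst hst' ss' ts'.
have [nP subP _] := HG s t hst; have [nQ subQ _] := HG s' t' hst'.
have dis : ndisj (G s t) (G s' t').
  apply/allP => x /subP xP; apply: contraTN (dF _ _ _ _ hst hst' ss' ts') => /subQ xQ /=.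
  by apply/allPn; exists x; rewrite ?negbK.
have ed : edisj inv (contract (G s t)) (contract (G s' t')).
  apply/allP => d /mem_contract [dP _]; move/allP: dis => /(_ _ dP) dQ.
  by apply/andP; split; apply: contra dQ => /mem_contract []; rewrite ?invK.
split=> // [[cPQ|cPQ]].
- apply: (contract_not_crossing_dir nP _ _ dis ed cPQ) => d /mem_contract //; by case.
- apply: (contract_not_crossing_dir nP _ _ dis _ cPQ).
  + by move=> d /mem_contract [].
  + by move=> d; rewrite /revp mem_rev => /mapP [e /mem_contract [a1 a2] ->]; rewrite invK.
  + apply/allP => d dP; move/allP: ed => /(_ d dP) /andP [m1 m2].
    by rewrite /revp !mem_rev -{1}(invK d) !(mem_map (@perm_inj _ inv)) m1 m2.
Qed.

Lemma uncrossed_iff_node_disjoint :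
  uncrossed_flow tl inv rot h <-> node_disjoint_flow2 tl inv rot h.
Proof. by split; [exact: uncrossed_node_disjoint | exact: node_disjoint_uncrossed]. Qed.

End Gadgets.

Theorem lemma5p3 (V D : finType) (tl : D -> V) (inv rot : {perm D})
  (h : rel V) :
  rotation_system tl inv rot ->
  planar_emb tl inv rot ->
  (forall v, degG tl v <= 4) ->
  matching h ->
  (forall v, degH h v = 1 -> degG tl v <= 3) ->
  (uncrossed_flow tl inv rot h <-> node_disjoint_flow2 tl inv rot h).
Proof. by move=> rs _ deg4 hm hdeg; apply: uncrossed_iff_node_disjoint. Qed.
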